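(* Let $\{Y_x\}_{x\in\mathcal{X}}$ be a Gaussian process with prior mean $\mu_x$ and prior covariance $\sigma_{xx'}$. Let $\mathcal{D}\subset\mathcal{X}$ be a finite set of inputs with observed outputs $y_{\mathcal{D}}$, partitioned into pairwise disjoint sets $\mathcal{D}_1,\ldots,\mathcal{D}_M$ with $|\mathcal{D}_m|=|\mathcal{D}|/M$, and let $\mathcal{U}\subseteq\mathcal{X}\setminus\mathcal{D}$ be a finite set of test inputs. Let $\sigma_n^2>0$ and let $F\in\mathbb{R}^{R\times|\mathcal{D}|}$ be the (upper triangular) incomplete Cholesky factor used to approximate $\Sigma_{\mathcal{D}\mathcal{D}}\approx F^\top F+\sigma_n^2 I$, written columnwise as $F=(F_1\cdots F_M)$ with $F_m\in\mathbb{R}^{R\times|\mathcal{D}_m|}$ the columns corresponding to $\mathcal{D}_m$. For $m=1,\ldots,M$ define $\dot{y}_m\triangleq F_m(y_{\mathcal{D}_m}-\mu_{\mathcal{D}_m})$, $\dot{\Sigma}_m\triangleq F_m\Sigma_{\mathcal{D}_m\mathcal{U}}$, $\Phi_m\triangleq F_mF_m^\top$; let $\Phi\triangleq I+\sigma_n^{-2}\sum_{m=1}^M\Phi_m$, $\ddot{y}\triangleq\Phi^{-1}\sum_{m=1}^M\dot{y}_m$, $\ddot{\Sigma}\triangleq\Phi^{-1}\sum_{m=1}^M\dot{\Sigma}_m$; let $\widetilde{\mu}^m_{\mathcal{U}}\triangleq\sigma_n^{-2}\Sigma_{\mathcal{U}\mathcal{D}_m}(y_{\mathcal{D}_m}-\mu_{\mathcal{D}_m})-\sigma_n^{-4}\dot{\Sigma}_m^\top\ddot{y}$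 and $\widetilde{\Sigma}^m_{\mathcal{U}\mathcal{U}}\triangleq\sigma_n^{-2}\Sigma_{\mathcal{U}\mathcal{D}_m}\Sigma_{\mathcal{D}_m\mathcal{U}}-\sigma_n^{-4}\dot{\Sigma}_m^\top\ddot{\Sigma}$; and let $\widetilde{\mu}_{\mathcal{U}}\triangleq\mu_{\mathcal{U}}+\sum_{m=1}^M\widetilde{\mu}^m_{\mathcal{U}}$ and $\widetilde{\Sigma}_{\mathcal{U}\mathcal{U}}\triangleq\Sigma_{\mathcal{U}\mathcal{U}}-\sum_{m=1}^M\widetilde{\Sigma}^m_{\mathcal{U}\mathcal{U}}$. Let $\mu^{\mathrm{ICF}}_{\mathcal{U}|\mathcal{D}}\triangleq\mu_{\mathcal{U}}+\Sigma_{\mathcal{U}\mathcal{D}}(F^\top F+\sigma_n^2I)^{-1}(y_{\mathcal{D}}-\mu_{\mathcal{D}})$ and $\Sigma^{\mathrm{ICF}}_{\mathcal{U}\mathcal{U}|\mathcal{D}}\triangleq\Sigma_{\mathcal{U}\mathcal{U}}-\Sigma_{\mathcal{U}\mathcal{D}}(F^\top F+\sigma_n^2I)^{-1}\Sigma_{\mathcal{D}\mathcal{U}}$. Then $\widetilde{\mu}_{\mathcal{U}}=\mu^{\mathrm{ICF}}_{\mathcal{U}|\mathcal{D}}$ and $\widetilde{\Sigma}_{\mathcal{U}\mathcal{U}}=\Sigma^{\mathrm{ICF}}_{\mathcal{U}\mathcal{U}|\mathcal{D}}$.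
   Context: For finite sets $\mathcal{A},\mathcal{B}\subset\mathcal{X}$, $\mu_{\mathcal{A}}$ denotes the column vector of prior means $\mu_x$, $x\in\mathcal{A}$, and $\Sigma_{\mathcal{A}\mathcal{B}}$ the matrix of prior covariances $\sigma_{xx'}$, $x\in\mathcal{A}$, $x'\in\mathcal{B}$; $\Sigma_{\mathcal{B}\mathcal{A}}$ is its transpose. Vectors and matrices indexed by $\mathcal{D}$ are ordered consistently with the partition $\mathcal{D}_1,\ldots,\mathcal{D}_M$ (the same ordering as the columns of $F$). $I$ denotes an identity matrix of the appropriate size. *)

From HB Require Import structures.
From mathcomp Require Import all_boot all_order all_algebra.
Set Implicit Arguments. Unset Strict Implicit. Unset Printing Implicit Defensive.
Import Order.TTheory GRing.Theory Num.Theory.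
Local Open Scope ring_scope.

Section GPDefs.
Variables (R : realFieldType) (X : Type).
Variables (mu : X -> R) (sigma : X -> X -> R).

Definition muv n (a : 'I_n -> X) : 'cV[R]_n := \col_i mu (a i).
Definition Sig m n (a : 'I_m -> X) (b : 'I_n -> X) : 'M[R]_(m, n) :=
  \matrix_(i, j) sigma (a i) (b j).

Definition is_covariance : Prop :=
  (forall x x', sigma x x' = sigma x' x) /\
  (forall n (a : 'I_n -> X) (c : 'cV[R]_n), 0 <= ((c^T *m Sig a a *m c) 0 0)).

(* D is indexed by 'I_(M*k), ordered consistently with the partition:
   the j-th element of block D_m has index mxvec_index m j (block m occupies
   the contiguous indices m*k, ..., m*k + k - 1). *)
Variables (M k u r : nat).
Variables (dD : 'I_(M * k) -> X) (uU : 'I_u -> X).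
Variables (y : 'cV[R]_(M * k)) (s2 : R) (F : 'M[R]_(r, M * k)).

Definition Dm (m : 'I_M) : 'I_k -> X := fun j => dD (mxvec_index m j).
Definition ydm (m : 'I_M) : 'cV[R]_k := \col_j y (mxvec_index m j) 0.
Definition Fm (m : 'I_M) : 'M[R]_(r, k) := colsub (mxvec_index m) F.

Definition ydot (m : 'I_M) : 'cV[R]_r := Fm m *m (ydm m - muv (Dm m)).
Definition Sdot (m : 'I_M) : 'M[R]_(r, u) := Fm m *m Sig (Dm m) uU.
Definition Phim (m : 'I_M) : 'M[R]_r := Fm m *m (Fm m)^T.
Definition Phi : 'M[R]_r := 1%:M + s2^-1 *: \sum_(m < M) Phim m.
Definition yddot : 'cV[R]_r := invmx Phi *m \sum_(m < M) ydot m.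
Definition Sddot : 'M[R]_(r, u) := invmx Phi *m \sum_(m < M) Sdot m.

Definition mu_tilde_m (m : 'I_M) : 'cV[R]_u :=
  s2^-1 *: (Sig uU (Dm m) *m (ydm m - muv (Dm m)))
  - s2^-2 *: ((Sdot m)^T *m yddot).
Definition Sig_tilde_m (m : 'I_M) : 'M[R]_u :=
  s2^-1 *: (Sig uU (Dm m) *m Sig (Dm m) uU)
  - s2^-2 *: ((Sdot m)^T *m Sddot).

Definition mu_tilde : 'cV[R]_u := muv uU + \sum_(m < M) mu_tilde_m m.
Definition Sig_tilde : 'M[R]_u := Sig uU uU - \sum_(m < M) Sig_tilde_m m.

Definition mu_ICF : 'cV[R]_u :=
  muv uU + Sig uU dD *m invmx (F^T *m F + s2%:M) *m (y - muv dD).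
Definition Sig_ICF : 'M[R]_u :=
  Sig uU uU - Sig uU dD *m invmx (F^T *m F + s2%:M) *m Sig dD uU.

End GPDefs.

(** Woodbury: [(F^T F + s2 I)^-1 = s2^-1 I - s2^-2 F^T Phi^-1 F] with
    [Phi = I + s2^-1 F F^T], which is invertible as the identity plus a
    positive semidefinite matrix.  Each distributed quantity is the block of a
    product over one part [D_m] of the partition, so summing over [m]
    reassembles [F F^T], [F (y_D - mu_D)], [F Sigma_DU], [Sigma_UD (y_D - mu_D)]
    and [Sigma_UD Sigma_DU], and both sides agree by linearity. *)
From HB Require Import structures.
From mathcomp Require Import all_boot all_order all_algebra.
Set Implicit Arguments. Unset Strict Implicit. Unset Printing Implicit Defensive.
Import Order.TTheory GRing.Theory Num.Theory.
Local Open Scope ring_scope.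

Lemma mulmx_block_sum (R : pzSemiRingType) M k p q
    (G : 'M[R]_(p, M * k)) (H : 'M[R]_(M * k, q)) :
  \sum_(m < M) colsub (mxvec_index m) G *m rowsub (mxvec_index m) H = G *m H.
Proof.
apply/matrixP => i l; rewrite summxE !mxE.
under eq_bigr => m _ do rewrite mxE.
rewrite pair_big /= (reindex (uncurry (@mxvec_index M k)) (@curry_mxvec_bij M k)).
by apply: eq_bigr => -[a b] _; rewrite !mxE.
Qed.

Lemma unitmx_ker0 (R : fieldType) n (A : 'M[R]_n) :
  (forall v : 'rV_n, v *m A = 0 -> v = 0) -> A \in unitmx.
Proof.
move=> A_inj; rewrite -row_free_unit -kermx_eq0.
apply/rowV0P => v /sub_kermxP; exact: A_inj.
Qed.

Section RowNorm.
Variable R : realDomainType.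

Lemma mulmx_tr_row_ge0 n (w : 'rV[R]_n) : 0 <= (w *m w^T) 0 0.
Proof. by rewrite mxE; apply: sumr_ge0 => j _; rewrite mxE -expr2 sqr_ge0. Qed.

Lemma mulmx_tr_row_eq0 n (w : 'rV[R]_n) : (w *m w^T) 0 0 = 0 -> w = 0.
Proof.
have sqr_entry_ge0 i : true -> 0 <= w 0 i * w^T i 0 by rewrite mxE -expr2 sqr_ge0.
rewrite mxE => /(psumr_eq0P sqr_entry_ge0) w0; apply/rowP => j.
by move: (w0 j isT) => /eqP; rewrite !mxE mulf_eq0 orbb => /eqP.
Qed.

End RowNorm.

Lemma unitmx_1_addZ_mul_tr (R : realFieldType) r N (P : 'M[R]_(r, N)) c :
  0 < c -> 1%:M + c *: (P *m P^T) \in unitmx.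
Proof.
move=> c_gt0; apply: unitmx_ker0 => v /(congr1 (fun z => (z *m v^T) 0 0)).
rewrite mulmxDr mulmx1 -scalemxAr mulmxDl -scalemxAl !mulmxA.
rewrite -(mulmxA (v *m P)) -trmx_mul mul0mx.
rewrite [(_ + _ : 'M_1) 0 0]mxE [(_ *: _ : 'M_1) 0 0]mxE [(0 : 'M_1) 0 0]mxE.
move=> /eqP; rewrite paddr_eq0 ?mulr_ge0 ?(ltW c_gt0) ?mulmx_tr_row_ge0 //.
by case/andP=> /eqP /mulmx_tr_row_eq0.
Qed.

Section Woodbury.
Variables (R : realFieldType) (r N : nat) (F : 'M[R]_(r, N)) (s2 : R).
Hypothesis s2_gt0 : 0 < s2.

Let Phi := 1%:M + s2^-1 *: (F *m F^T).

Lemma invmx_trmul_add_scalar :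
  invmx (F^T *m F + s2%:M) = s2^-1%:M - s2^-2 *: (F^T *m invmx Phi *m F).
Proof.
have s2_neq0 : s2 != 0 by rewrite gt_eqF.
have Phi_unit : Phi \in unitmx by apply: unitmx_1_addZ_mul_tr; rewrite invr_gt0.
set A := F^T *m F + s2%:M; set W := _ - _.
have push_through : A *m F^T = s2 *: (F^T *m Phi).
  rewrite /A /Phi mulmxDl mulmxDr mulmx1 mul_scalar_mx -scalemxAr scalerDr.
  by rewrite scalerA mulfV // scale1r mulmxA addrC.
have AW : A *m W = 1%:M.
  rewrite /W mulmxBr mul_mx_scalar -scalemxAr !mulmxA push_through -scalemxAl.
  rewrite -(mulmxA F^T) mulmxV // mulmx1 -scalemxAl scalerA /A scalerDr.
  rewrite expr2 invfM -mulrA mulVf // mulr1 scale_scalar_mx mulVf //.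
  by rewrite addrAC subrr add0r.
have [A_unit _] := mulmx1_unit AW.
by rewrite -[W]mul1mx -(mulVmx A_unit) -mulmxA AW mulmx1.
Qed.

Lemma mulmx_invmx_trmul_add_scalar p q (A : 'M[R]_(p, N)) (B : 'M[R]_(N, q)) :
  A *m invmx (F^T *m F + s2%:M) *m B =
  s2^-1 *: (A *m B) - s2^-2 *: (A *m F^T *m (invmx Phi *m (F *m B))).
Proof.
rewrite invmx_trmul_add_scalar mulmxBr mulmxBl mul_mx_scalar -scalemxAl.
by rewrite -!scalemxAr -!scalemxAl !mulmxA.
Qed.

End Woodbury.

Section PartitionBlocks.
Variables (R : realFieldType) (X : Type) (mu : X -> R) (sigma : X -> X -> R).
Variables (M k u r : nat) (dD : 'I_(M * k) -> X) (uU : 'I_u -> X).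
Variables (y : 'cV[R]_(M * k)) (F : 'M[R]_(r, M * k)).

Lemma trmx_Fm m : (Fm F m)^T = rowsub (mxvec_index m) F^T.
Proof. by apply/matrixP => i j; rewrite !mxE. Qed.

Lemma Sig_Dm_l m : Sig sigma (Dm dD m) uU = rowsub (mxvec_index m) (Sig sigma dD uU).
Proof. by apply/matrixP => i j; rewrite !mxE. Qed.

Lemma Sig_Dm_r m : Sig sigma uU (Dm dD m) = colsub (mxvec_index m) (Sig sigma uU dD).
Proof. by apply/matrixP => i j; rewrite !mxE. Qed.

Lemma residual_Dm m :
  ydm y m - muv mu (Dm dD m) = rowsub (mxvec_index m) (y - muv mu dD).
Proof. by apply/matrixP => i j; rewrite (ord1 j) !mxE. Qed.

Lemma sum_Phim : \sum_(m < M) Phim F m = F *m F^T.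
Proof. by rewrite -mulmx_block_sum; apply: eq_bigr => m _; rewrite /Phim trmx_Fm. Qed.

Lemma sum_ydot : \sum_(m < M) ydot mu dD y F m = F *m (y - muv mu dD).
Proof. by rewrite -mulmx_block_sum; apply: eq_bigr => m _; rewrite /ydot residual_Dm. Qed.

Lemma sum_Sdot : \sum_(m < M) Sdot sigma dD uU F m = F *m Sig sigma dD uU.
Proof. by rewrite -mulmx_block_sum; apply: eq_bigr => m _; rewrite /Sdot Sig_Dm_l. Qed.

Lemma sum_Sig_residual :
  \sum_(m < M) Sig sigma uU (Dm dD m) *m (ydm y m - muv mu (Dm dD m)) =
  Sig sigma uU dD *m (y - muv mu dD).
Proof.
by rewrite -mulmx_block_sum; apply: eq_bigr => m _; rewrite Sig_Dm_r residual_Dm.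
Qed.

Lemma sum_Sig_Sig :
  \sum_(m < M) Sig sigma uU (Dm dD m) *m Sig sigma (Dm dD m) uU =
  Sig sigma uU dD *m Sig sigma dD uU.
Proof.
by rewrite -mulmx_block_sum; apply: eq_bigr => m _; rewrite Sig_Dm_r Sig_Dm_l.
Qed.

End PartitionBlocks.

Lemma trmx_Sig (R : realFieldType) (X : Type) (sigma : X -> X -> R) m n
    (a : 'I_m -> X) (b : 'I_n -> X) :
  (forall x x', sigma x x' = sigma x' x) -> (Sig sigma a b)^T = Sig sigma b a.
Proof. by move=> sigma_sym; apply/matrixP => i j; rewrite !mxE sigma_sym. Qed.

Theorem theorem3 (R : realFieldType) (X : Type)
  (mu : X -> R) (sigma : X -> X -> R) (M k u r : nat)
  (dD : 'I_(M * k) -> X) (uU : 'I_u -> X)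
  (y : 'cV[R]_(M * k)) (s2 : R) (F : 'M[R]_(r, M * k)) :
  is_covariance sigma ->
  injective dD -> injective uU ->
  (forall i j, dD i <> uU j) ->
  0 < s2 ->
  (forall (i : 'I_r) (j : 'I_(M * k)), (j < i)%N -> F i j = 0) ->
  mu_tilde mu sigma dD uU y s2 F = mu_ICF mu sigma dD uU y s2 F /\
  Sig_tilde sigma dD uU s2 F = Sig_ICF sigma dD uU s2 F.
Proof.
(* The identity is purely algebraic: only the symmetry of [sigma] and
   [s2 > 0] are needed. *)
move=> [sigma_sym _] _ _ _ s2_gt0 _.
have sum_trmx_Sdot : \sum_(m < M) (Sdot sigma dD uU F m)^T = Sig sigma uU dD *m F^T.
  by rewrite -linear_sum /= sum_Sdot trmx_mul trmx_Sig.
split.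
- rewrite /mu_tilde /mu_ICF /mu_tilde_m; congr (_ + _).
  rewrite sumrB -!scaler_sumr sum_Sig_residual -mulmx_suml sum_trmx_Sdot.
  by rewrite /yddot /Phi sum_Phim sum_ydot mulmx_invmx_trmul_add_scalar.
- rewrite /Sig_tilde /Sig_ICF /Sig_tilde_m; congr (_ - _).
  rewrite sumrB -!scaler_sumr sum_Sig_Sig -mulmx_suml sum_trmx_Sdot.
  by rewrite /Sddot /Phi sum_Phim sum_Sdot mulmx_invmx_trmul_add_scalar.
Qed.
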